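(* If $\mathbf{C}$ is a propositional Hilbert-type calculus whose set of theorems $\mathrm{Thm}(\mathbf{C})$ is undecidable, then $\mathbf{C}$ is not effectively approximable.
   Context: A propositional language has variables $X_1,X_2,\ldots$ and finitely many connectives with arities. A substitution $\sigma$ maps variables to formulas; $F\sigma$ denotes simultaneous replacement. A propositional Hilbert-type calculus $\mathbf{C}$ is given by a finite set of axioms and a finite set of rules (premises $A_1,\ldots,A_n$, conclusion $C$). A derivation is a finite sequence of formulas each of which is a substitution instance of an axiom or is $C\sigma$ for some rule and substitution $\sigma$ with all $A_j\sigma$ occurring earlier; $\mathrm{Thm}(\mathbf{C})$ is the set of derivable formulas. A finite-valued logic $\mathbf{M}$ is given by a finite set $V(\mathbf{M})$ of truth values, designated values $V^+(\mathbf{M})$, and a truth function for each connective; valuations map variables to truth values and extend to formulas; a valuation satisfies $F$ if $F$ is designated; a tautology is a formula satisfied by every valuation; $\mathrm{Taut}(\mathbf{M})$ is the set of tautologies; $\mathbf{M}_1\unlhd\mathbf{M}_2$ means $\mathrm{Taut}(\mathbf{M}_1)\subseteq\mathrm{Taut}(\mathbf{M}_2)$. $\mathbf{M}$ is a cover for $\mathbf{C}$ if all axioms of $\mathbf{C}$ are tautologies of $\mathbf{M}$ and for every rule every valuation satisfying all premises satisfies the conclusion. $\mathbf{C}$ is effectively approximable if there is an effectively enumerated sequence $\langle\mathbf{M}_1,\mathbf{M}_2,\ldots\rangle$ of covers of $\mathbf{C}$ such that $\mathbf{M}_i\unlhd\mathbf{M}_j$ whenever $i\ge j$ and $\mathrm{Thm}(\mathbf{C})=\bigcap_j\mathrm{Taut}(\mathbf{M}_j)$.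 *)

From Stdlib Require Import List Arith.
Import ListNotations.

Inductive recfun : Type :=
| RZero : recfun
| RSucc : recfun
| RProj : nat -> recfun
| RComp : recfun -> list recfun -> recfun
| RPrec : recfun -> recfun -> recfun
| RMu   : recfun -> recfun.

Inductive reval : recfun -> list nat -> nat -> Prop :=
| ev_zero v : reval RZero v 0
| ev_succ x v : reval RSucc (x :: v) (S x)
| ev_proj i v : reval (RProj i) v (nth i v 0)
| ev_comp f gs v ys y :
    revals gs v ys -> reval f ys y -> reval (RComp f gs) v y
| ev_prec0 f g v y : reval f v y -> reval (RPrec f g) (0 :: v) y
| ev_precS f g x v z y :
    reval (RPrec f g) (x :: v) z -> reval g (x :: z :: v) y ->
    reval (RPrec f g) (S x :: v) y
| ev_mu f v n :
    reval f (n :: v) 0 ->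
    (forall m, m < n -> exists k, reval f (m :: v) (S k)) ->
    reval (RMu f) v n
with revals : list recfun -> list nat -> list nat -> Prop :=
| evs_nil v : revals [] v []
| evs_cons g gs v y ys :
    reval g v y -> revals gs v ys -> revals (g :: gs) v (y :: ys).

Definition npair (x y : nat) : nat := (x + y) * (x + y + 1) / 2 + y.

Fixpoint code_list (l : list nat) : nat :=
  match l with
  | [] => 0
  | x :: l' => S (npair x (code_list l'))
  end.

(* A language is given by the list of arities of its (finitely many)
   connectives: connective [c] (for [c < length ar]) has arity [nth c ar 0].
   Variable [Var n] stands for X_{n+1}. *)
Definition language := list nat.

Inductive form : Type :=
| Var : nat -> form
| App : nat -> list form -> form.

Fixpoint wf (ar : language) (F : form) : Prop :=
  match F with
  | Var _ => True
  | App c args =>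
      c < length ar /\ length args = nth c ar 0 /\
      (fix wfs (l : list form) : Prop :=
         match l with [] => True | G :: l' => wf ar G /\ wfs l' end) args
  end.

Fixpoint code_form (F : form) : nat :=
  match F with
  | Var n => npair 0 n
  | App c args => npair (S c) (code_list (map code_form args))
  end.

Fixpoint subst (s : nat -> form) (F : form) : form :=
  match F with
  | Var n => s n
  | App c args => App c (map (subst s) args)
  end.

Definition wf_subst (ar : language) (s : nat -> form) : Prop :=
  forall n, wf ar (s n).

Record calculus := Calculus {
  axioms : list form;
  rules  : list (list form * form)  (* (premises, conclusion) *)
}.

Definition wf_calculus (ar : language) (C : calculus) : Prop :=
  (forall A, In A (axioms C) -> wf ar A) /\
  (forall r, In r (rules C) -> (forall A, In A (fst r) -> wf ar A) /\ wf ar (snd r)).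

Definition deriv_step (ar : language) (C : calculus) (prev : list form) (G : form) : Prop :=
  (exists A s, In A (axioms C) /\ wf_subst ar s /\ G = subst s A) \/
  (exists r s, In r (rules C) /\ wf_subst ar s /\ G = subst s (snd r) /\
               forall A, In A (fst r) -> In (subst s A) prev).

Definition derivation (ar : language) (C : calculus) (d : list form) : Prop :=
  forall i, i < length d -> deriv_step ar C (firstn i d) (nth i d (Var 0)).

Definition Thm (ar : language) (C : calculus) (F : form) : Prop :=
  exists d, derivation ar C d /\ In F d.

(* Truth values are 0, ..., nval-1; [desig v] tells whether v is designated;
   [tfun c args] is the truth function of connective c. *)
Record fvlogic := FVLogic {
  nval  : nat;
  desig : nat -> bool;
  tfun  : nat -> list nat -> nat
}.

Definition is_fvlogic (ar : language) (M : fvlogic) : Prop :=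
  forall c args, c < length ar -> length args = nth c ar 0 ->
    (forall v, In v args -> v < nval M) -> tfun M c args < nval M.

Definition valuation (M : fvlogic) (e : nat -> nat) : Prop :=
  forall n, e n < nval M.

Fixpoint value (M : fvlogic) (e : nat -> nat) (F : form) : nat :=
  match F with
  | Var n => e n
  | App c args => tfun M c (map (value M e) args)
  end.

Definition satisfies (M : fvlogic) (e : nat -> nat) (F : form) : Prop :=
  desig M (value M e F) = true.

Definition Taut (ar : language) (M : fvlogic) (F : form) : Prop :=
  wf ar F /\ forall e, valuation M e -> satisfies M e F.

Definition taut_le (ar : language) (M1 M2 : fvlogic) : Prop :=
  forall F, Taut ar M1 F -> Taut ar M2 F.

Definition cover (ar : language) (C : calculus) (M : fvlogic) : Prop :=
  (forall A, In A (axioms C) -> Taut ar M A) /\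
  (forall r, In r (rules C) -> forall e, valuation M e ->
     (forall A, In A (fst r) -> satisfies M e A) -> satisfies M e (snd r)).

Definition effectively_enumerated (ar : language) (M : nat -> fvlogic) : Prop :=
  exists pN pD pT : recfun,
    (forall i, reval pN [i] (nval (M i))) /\
    (forall i v, v < nval (M i) -> reval pD [i; v] (if desig (M i) v then 1 else 0)) /\
    (forall i c args, c < length ar -> length args = nth c ar 0 ->
        (forall v, In v args -> v < nval (M i)) ->
        reval pT [i; c; code_list args] (tfun (M i) c args)).

Definition effectively_approximable (ar : language) (C : calculus) : Prop :=
  exists M : nat -> fvlogic,
    (forall i, is_fvlogic ar (M i)) /\
    effectively_enumerated ar M /\
    (forall i, cover ar C (M i)) /\
    (forall i j, j <= i -> taut_le ar (M i) (M j)) /\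
    (forall F, wf ar F -> (Thm ar C F <-> forall j, Taut ar (M j) F)).

Definition decidable_set (ar : language) (S : form -> Prop) : Prop :=
  exists p : recfun, forall F, wf ar F ->
    exists b : bool, reval p [code_form F] (if b then 1 else 0) /\ (b = true <-> S F).

From Stdlib Require Import List Arith Lia Wf_nat IndefiniteDescription Classical.
Import ListNotations.

(* If C is effectively approximable by M_1, M_2, ..., then a well-formed
   formula is a non-theorem of C iff it is refuted in some M_j.  Both the
   theorems and the non-theorems are therefore semidecidable, and a single
   unbounded search for a witness of either kind decides Thm(C).

   A witness for a theorem is a derivation whose steps name an axiom or rule
   together with a substitution; the substituted formulas are taken from a
   table of codes which is checked, entry by entry, to consist of well-formed
   formulas.  A witness that F is not a theorem is an index j with a table of
   values in M_j of the subformulas of F, each entry checked against those of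
   its arguments by the computable truth functions of M_j; the valuation read
   off the variable entries then falsifies F in M_j. *)

(** * Cantor pairing *)

Fixpoint tri (s : nat) : nat := match s with 0 => 0 | S s' => s + tri s' end.

Lemma tri_double s : tri s * 2 = s * (s + 1).
Proof. induction s as [|s IH]; simpl tri; nia. Qed.

Lemma npair_tri x y : npair x y = tri (x + y) + y.
Proof. unfold npair. rewrite <- tri_double, Nat.div_mul; lia. Qed.

Lemma tri_mono a b : a <= b -> tri a <= tri b.
Proof. induction 1; simpl; lia. Qed.

Lemma tri_offset_inj s y s' y' :
  y <= s -> y' <= s' -> tri s + y = tri s' + y' -> s = s'.
Proof.
  intros Hy Hy' E.
  destruct (Nat.lt_total s s') as [Hlt | [Heq | Hlt]]; [| exact Heq |].
  - pose proof (tri_mono (S s) s' Hlt). simpl in *. lia.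
  - pose proof (tri_mono (S s') s Hlt). simpl in *. lia.
Qed.

Lemma npair_inj x y x' y' : npair x y = npair x' y' -> x = x' /\ y = y'.
Proof.
  rewrite !npair_tri. intros E.
  assert (Hs : x + y = x' + y') by (apply (tri_offset_inj _ y _ y'); lia).
  rewrite Hs in E. lia.
Qed.

Lemma le_npair x y : x <= npair x y /\ y <= npair x y.
Proof.
  rewrite npair_tri. pose proof (tri_mono x (x + y)).
  assert (x <= tri x) by (induction x; simpl; lia). lia.
Qed.

(* Successor in the Cantor enumeration of pairs, which runs along each
   diagonal x + y = s from (s, 0) to (0, s). *)
Definition unpair_succ (p : nat * nat) : nat * nat :=
  match p with (0, y) => (S y, 0) | (S x, y) => (x, S y) end.

Fixpoint unpair (z : nat) : nat * nat :=
  match z with 0 => (0, 0) | S z' => unpair_succ (unpair z') end.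

Definition pi1 (z : nat) : nat := fst (unpair z).
Definition pi2 (z : nat) : nat := snd (unpair z).

Lemma npair_unpair_succ p :
  npair (fst (unpair_succ p)) (snd (unpair_succ p)) = S (npair (fst p) (snd p)).
Proof.
  destruct p as [[|x] y]; simpl; rewrite !npair_tri.
  - rewrite !Nat.add_0_r. simpl. lia.
  - replace (x + S y) with (S (x + y)) by lia. simpl. lia.
Qed.

Lemma npair_pi z : npair (pi1 z) (pi2 z) = z.
Proof.
  unfold pi1, pi2. induction z as [|z IH]; [reflexivity|].
  simpl. rewrite npair_unpair_succ, IH. reflexivity.
Qed.

Lemma pi1_npair x y : pi1 (npair x y) = x.
Proof. exact (proj1 (npair_inj _ _ x y (npair_pi (npair x y)))). Qed.

Lemma pi2_npair x y : pi2 (npair x y) = y.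
Proof. exact (proj2 (npair_inj _ _ x y (npair_pi (npair x y)))). Qed.

#[export] Hint Rewrite pi1_npair pi2_npair : pairing.

Lemma reval_proj_eq i v y : nth i v 0 = y -> reval (RProj i) v y.
Proof. intros <-. constructor. Qed.

Lemma reval_comp1 f g v y z : reval g v y -> reval f [y] z -> reval (RComp f [g]) v z.
Proof. intros Hg Hf. econstructor; [repeat econstructor; eassumption | exact Hf]. Qed.

Lemma reval_comp2 f g1 g2 v y1 y2 z :
  reval g1 v y1 -> reval g2 v y2 -> reval f [y1; y2] z -> reval (RComp f [g1; g2]) v z.
Proof. intros H1 H2 Hf. econstructor; [repeat econstructor; eassumption | exact Hf]. Qed.

Lemma reval_comp3 f g1 g2 g3 v y1 y2 y3 z :
  reval g1 v y1 -> reval g2 v y2 -> reval g3 v y3 -> reval f [y1; y2; y3] z ->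
  reval (RComp f [g1; g2; g3]) v z.
Proof. intros H1 H2 H3 Hf. econstructor; [repeat econstructor; eassumption | exact Hf]. Qed.

Lemma reval_prec f g v (h : nat -> nat) n :
  reval f v (h 0) -> (forall x, x < n -> reval g (x :: h x :: v) (h (S x))) ->
  reval (RPrec f g) (n :: v) (h n).
Proof.
  intros H0 HS. induction n as [|n IH]; [constructor; exact H0|].
  econstructor; [apply IH; intros x Hx | ]; apply HS; lia.
Qed.

Lemma reval_mu_least f v (g : nat -> nat) n :
  (forall m, reval f (m :: v) (g m)) -> g n = 0 -> (forall m, m < n -> g m <> 0) ->
  reval (RMu f) v n.
Proof.
  intros Hf Hn Hlt. constructor.
  - rewrite <- Hn. apply Hf.
  - intros m Hm. exists (pred (g m)).
    replace (S (pred (g m))) with (g m) by (specialize (Hlt m Hm); lia). apply Hf.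
Qed.

Lemma reval_mu_exists f v (g : nat -> nat) :
  (forall m, reval f (m :: v) (g m)) -> (exists n, g n = 0) ->
  exists n, g n = 0 /\ reval (RMu f) v n.
Proof.
  intros Hf Hex.
  destruct (dec_inh_nat_subset_has_unique_least_element (fun n => g n = 0))
    as [n [[Hn Hleast] _]]; [intros n; lia | exact Hex |].
  exists n. split; [exact Hn|]. apply (reval_mu_least f v g n Hf Hn).
  intros m Hm Hgm. specialize (Hleast m Hgm). lia.
Qed.

Definition prog_add := RPrec (RProj 0) (RComp RSucc [RProj 1]).

Lemma reval_add a b : reval prog_add [a; b] (a + b).
Proof.
  apply (reval_prec _ _ _ (fun a => a + b)); [apply reval_proj_eq; reflexivity|].
  intros x _. apply reval_comp1 with (x + b); [apply reval_proj_eq; reflexivity | constructor].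
Qed.

Definition prog_pred := RPrec RZero (RProj 0).

Lemma reval_pred a : reval prog_pred [a] (pred a).
Proof.
  apply (reval_prec _ _ _ pred); [constructor|].
  intros x _. apply reval_proj_eq. reflexivity.
Qed.

Definition prog_sub := RComp (RPrec (RProj 0) (RComp prog_pred [RProj 1])) [RProj 1; RProj 0].

Lemma reval_sub a b : reval prog_sub [a; b] (a - b).
Proof.
  apply reval_comp2 with b a; try (apply reval_proj_eq; reflexivity).
  apply (reval_prec _ _ _ (fun b => a - b)); [apply reval_proj_eq; simpl; lia|].
  intros x _. apply reval_comp1 with (a - x); [apply reval_proj_eq; reflexivity|].
  replace (a - S x) with (pred (a - x)) by lia. apply reval_pred.
Qed.

Definition prog_tri := RPrec RZero (RComp prog_add [RComp RSucc [RProj 0]; RProj 1]).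

Lemma reval_tri s : reval prog_tri [s] (tri s).
Proof.
  apply (reval_prec _ _ _ tri); [constructor|].
  intros x _. apply reval_comp2 with (S x) (tri x);
    [| apply reval_proj_eq; reflexivity | apply reval_add].
  apply reval_comp1 with x; [apply reval_proj_eq; reflexivity | constructor].
Qed.

Definition prog_npair := RComp prog_add [RComp prog_tri [prog_add]; RProj 1].

Lemma reval_npair x y : reval prog_npair [x; y] (npair x y).
Proof.
  rewrite npair_tri. apply reval_comp2 with (tri (x + y)) y;
    [| apply reval_proj_eq; reflexivity | apply reval_add].
  apply reval_comp1 with (x + y); [apply reval_add | apply reval_tri].
Qed.

(* [pi1 z + pi2 z] is the least [s] with [z < tri (s + 1)]. *)
Definition prog_diag :=
  RMu (RComp prog_sub [RComp RSucc [RProj 1]; RComp prog_tri [RComp RSucc [RProj 0]]]).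

Lemma reval_diag z : reval prog_diag [z] (pi1 z + pi2 z).
Proof.
  pose proof (npair_pi z) as E. rewrite npair_tri in E.
  apply (reval_mu_least _ _ (fun s => S z - tri (S s))).
  - intros s. apply reval_comp2 with (S z) (tri (S s)); [| | apply reval_sub].
    + apply reval_comp1 with z; [apply reval_proj_eq; reflexivity | constructor].
    + apply reval_comp1 with (S s); [| apply reval_tri].
      apply reval_comp1 with s; [apply reval_proj_eq; reflexivity | constructor].
  - simpl tri. lia.
  - intros m Hm. pose proof (tri_mono (S m) (pi1 z + pi2 z) Hm). lia.
Qed.

Definition prog_pi2 := RComp prog_sub [RProj 0; RComp prog_tri [prog_diag]].

Lemma reval_pi2 z : reval prog_pi2 [z] (pi2 z).
Proof.
  pose proof (npair_pi z) as E. rewrite npair_tri in E.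
  assert (Hz : pi2 z = z - tri (pi1 z + pi2 z)) by lia. rewrite Hz at 1.
  apply reval_comp2 with z (tri (pi1 z + pi2 z));
    [apply reval_proj_eq; reflexivity | | apply reval_sub].
  apply reval_comp1 with (pi1 z + pi2 z); [apply reval_diag | apply reval_tri].
Qed.

Definition prog_pi1 := RComp prog_sub [prog_diag; prog_pi2].

Lemma reval_pi1 z : reval prog_pi1 [z] (pi1 z).
Proof.
  assert (Hz : pi1 z = pi1 z + pi2 z - pi2 z) by lia. rewrite Hz at 1.
  apply reval_comp2 with (pi1 z + pi2 z) (pi2 z);
    [apply reval_diag | apply reval_pi2 | apply reval_sub].
Qed.

Definition computable (f : nat -> nat) : Prop := exists p, forall x, reval p [x] (f x).
Definition computable2 (f : nat -> nat -> nat) : Prop :=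
  computable (fun z => f (pi1 z) (pi2 z)).
Definition computable3 (f : nat -> nat -> nat -> nat) : Prop :=
  computable (fun z => f (pi1 z) (pi1 (pi2 z)) (pi2 (pi2 z))).

Lemma computable_ext f g : (forall x, f x = g x) -> computable g -> computable f.
Proof. intros E [p Hp]. exists p. intros x. rewrite E. apply Hp. Qed.

Lemma computable_id : computable (fun x => x).
Proof. exists (RProj 0). intros x. apply reval_proj_eq. reflexivity. Qed.

Lemma computable_const c : computable (fun _ => c).
Proof.
  induction c as [|c [p Hp]]; [exists RZero; constructor|].
  exists (RComp RSucc [p]). intros x. apply reval_comp1 with c; [apply Hp | constructor].
Qed.

Lemma computable_S : computable S.
Proof.
  exists (RComp RSucc [RProj 0]). intros x.
  apply reval_comp1 with x; [apply reval_proj_eq; reflexivity | constructor].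
Qed.

Lemma computable_pred : computable pred.
Proof. exists prog_pred. apply reval_pred. Qed.

Lemma computable_pi1 : computable pi1.
Proof. exists prog_pi1. apply reval_pi1. Qed.

Lemma computable_pi2 : computable pi2.
Proof. exists prog_pi2. apply reval_pi2. Qed.

Lemma computable_comp f g : computable f -> computable g -> computable (fun x => f (g x)).
Proof.
  intros [p Hp] [q Hq]. exists (RComp p [q]). intros x.
  apply reval_comp1 with (g x); [apply Hq | apply Hp].
Qed.

Lemma computable_npair f g :
  computable f -> computable g -> computable (fun x => npair (f x) (g x)).
Proof.
  intros [p Hp] [q Hq]. exists (RComp prog_npair [p; q]). intros x.
  apply reval_comp2 with (f x) (g x); [apply Hp | apply Hq | apply reval_npair].
Qed.

Lemma computable_op2 op f g :
  computable2 op -> computable f -> computable g -> computable (fun x => op (f x) (g x)).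
Proof.
  intros Hop Hf Hg.
  eapply computable_ext; [| exact (computable_comp _ _ Hop (computable_npair _ _ Hf Hg))].
  intros x. simpl. autorewrite with pairing. reflexivity.
Qed.

Lemma computable_op3 op f g h :
  computable3 op -> computable f -> computable g -> computable h ->
  computable (fun x => op (f x) (g x) (h x)).
Proof.
  intros Hop Hf Hg Hh.
  eapply computable_ext;
    [| exact (computable_comp _ _ Hop (computable_npair _ _ Hf (computable_npair _ _ Hg Hh)))].
  intros x. simpl. autorewrite with pairing. reflexivity.
Qed.

Lemma computable2_npair : computable2 npair.
Proof. apply (computable_ext _ _ npair_pi computable_id). Qed.

Lemma computable2_add : computable2 Nat.add.
Proof.
  exists (RComp prog_add [prog_pi1; prog_pi2]). intros z.
  apply reval_comp2 with (pi1 z) (pi2 z); [apply reval_pi1 | apply reval_pi2 | apply reval_add].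
Qed.

Lemma computable2_sub : computable2 Nat.sub.
Proof.
  exists (RComp prog_sub [prog_pi1; prog_pi2]). intros z.
  apply reval_comp2 with (pi1 z) (pi2 z); [apply reval_pi1 | apply reval_pi2 | apply reval_sub].
Qed.

Lemma computable_iter step :
  computable2 step -> computable3 (fun n prm a => Nat.iter n (step prm) a).
Proof.
  intros [p Hp].
  set (body := RPrec (RProj 1) (RComp p [RComp prog_npair [RProj 2; RProj 1]])).
  assert (Hbody : forall n prm a, reval body [n; prm; a] (Nat.iter n (step prm) a)).
  { intros n prm a.
    apply (reval_prec _ _ _ (fun n => Nat.iter n (step prm) a));
      [apply reval_proj_eq; reflexivity|].
    intros x _. apply reval_comp1 with (npair prm (Nat.iter x (step prm) a)).
    - apply reval_comp2 with prm (Nat.iter x (step prm) a);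
        [apply reval_proj_eq; reflexivity | apply reval_proj_eq; reflexivity | apply reval_npair].
    - simpl. specialize (Hp (npair prm (Nat.iter x (step prm) a))).
      autorewrite with pairing in Hp. exact Hp. }
  exists (RComp body [prog_pi1; RComp prog_pi1 [prog_pi2]; RComp prog_pi2 [prog_pi2]]). intros z.
  apply reval_comp3 with (pi1 z) (pi1 (pi2 z)) (pi2 (pi2 z)); [apply reval_pi1 | | | apply Hbody].
  - apply reval_comp1 with (pi2 z); [apply reval_pi2 | apply reval_pi1].
  - apply reval_comp1 with (pi2 z); apply reval_pi2.
Qed.

Lemma computable_search (g : nat -> nat) :
  computable g ->
  exists p, forall x, (exists n, g (npair n x) = 0) ->
    exists n, g (npair n x) = 0 /\ reval p [x] n.
Proof.
  intros [pg Hpg]. exists (RMu (RComp pg [prog_npair])). intros x Hex.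
  apply (reval_mu_exists _ _ (fun n => g (npair n x))); [| exact Hex].
  intros m. apply reval_comp1 with (npair m x); [apply reval_npair | apply Hpg].
Qed.

Create HintDb computable.
#[export] Hint Resolve computable_S computable_pred computable_pi1 computable_pi2
  computable2_npair computable2_add computable2_sub : computable.

(* Higher-order combinators are added to the database [computable] as
   [Hint Extern]s calling back into this tactic. *)
Ltac computable_tac :=
  cbv beta;
  match goal with
  | |- computable (fun x => x) => exact computable_id
  | |- computable (fun _ => ?c) => exact (computable_const c)
  | |- computable (fun x => ?op (@?f x) (@?g x) (@?h x)) =>
      apply (computable_op3 op f g h);
      [solve [eauto with computable] | computable_tac | computable_tac | computable_tac]
  | |- computable (fun x => ?op (@?f x) (@?g x)) =>
      apply (computable_op2 op f g);
      [solve [eauto with computable] | computable_tac | computable_tac]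
  | |- computable (fun x => ?op (@?f x)) =>
      apply (computable_comp op f); [solve [eauto with computable] | computable_tac]
  | |- computable2 _ => unfold computable2; computable_tac
  | |- computable3 _ => unfold computable3; computable_tac
  | |- _ => solve [eauto with computable]
  end.

Lemma iter_add a b : Nat.iter a (Nat.add b) 0 = a * b.
Proof. induction a as [|a IH]; simpl; [reflexivity|]. rewrite IH. lia. Qed.

Lemma computable2_mul : computable2 Nat.mul.
Proof.
  eapply computable_ext; [intros z; symmetry; apply iter_add|].
  apply (computable_op3 (fun n prm a => Nat.iter n (Nat.add prm) a) pi1 pi2 (fun _ => 0));
    [apply computable_iter, computable2_add | computable_tac ..].
Qed.

#[export] Hint Resolve computable2_mul : computable.

Definition cond (c a b : nat) : nat := match c with 0 => b | S _ => a end.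

Lemma computable3_cond : computable3 cond.
Proof.
  apply computable_ext with
    (g := fun z => (1 - (1 - pi1 z)) * pi1 (pi2 z) + (1 - pi1 z) * pi2 (pi2 z)).
  - intros z. unfold cond. destruct (pi1 z); simpl; lia.
  - computable_tac.
Qed.

Lemma computable_guard (b f : nat -> nat) p :
  computable b -> (forall x, b x <> 0 -> reval p [x] (f x)) ->
  computable (fun x => cond (b x) (f x) 0).
Proof.
  intros [pb Hb] Hp.
  exists (RComp (RPrec RZero (RComp p [RProj 2])) [pb; RProj 0]). intros x.
  apply reval_comp2 with (b x) x; [apply Hb | apply reval_proj_eq; reflexivity|].
  apply (reval_prec _ _ _ (fun k => cond k (f x) 0)); [constructor|].
  intros k Hk. apply reval_comp1 with x; [apply reval_proj_eq; reflexivity|]. apply Hp. lia.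
Qed.

Definition eq_test (a b : nat) : nat := Nat.b2n (a =? b).
Definition lt_test (a b : nat) : nat := Nat.b2n (a <? b).

Lemma computable2_eq_test : computable2 eq_test.
Proof.
  apply computable_ext with (g := fun z => 1 - ((pi1 z - pi2 z) + (pi2 z - pi1 z))).
  - intros z. unfold eq_test, Nat.b2n. destruct (Nat.eqb_spec (pi1 z) (pi2 z)); lia.
  - computable_tac.
Qed.

Lemma computable2_lt_test : computable2 lt_test.
Proof.
  apply computable_ext with (g := fun z => 1 - (1 - (pi2 z - pi1 z))).
  - intros z. unfold lt_test, Nat.b2n. destruct (Nat.ltb_spec (pi1 z) (pi2 z)); lia.
  - computable_tac.
Qed.

#[export] Hint Resolve computable3_cond computable2_eq_test computable2_lt_test : computable.

Lemma mul_neq_0 a b : a * b <> 0 <-> a <> 0 /\ b <> 0.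
Proof. rewrite Nat.mul_eq_0. tauto. Qed.

Lemma eq_test_neq_0 a b : eq_test a b <> 0 <-> a = b.
Proof. unfold eq_test, Nat.b2n. destruct (Nat.eqb_spec a b); split; congruence. Qed.

Lemma lt_test_neq_0 a b : lt_test a b <> 0 <-> a < b.
Proof. unfold lt_test, Nat.b2n. destruct (Nat.ltb_spec a b); split; intros; lia. Qed.

Lemma eq_test_eq_0 a b : eq_test a b = 0 <-> a <> b.
Proof. unfold eq_test, Nat.b2n. destruct (Nat.eqb_spec a b); split; congruence. Qed.

#[export] Hint Rewrite mul_neq_0 eq_test_neq_0 lt_test_neq_0 : nonzero.

(** * Coded lists *)

Definition lfold_step (f : nat -> nat -> nat -> nat) (prm s : nat) : nat :=
  cond (pi2 s) (npair (f prm (pi1 s) (pi1 (pred (pi2 s)))) (pi2 (pred (pi2 s)))) s.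

(* The state is [npair acc rest]; [l] iterations suffice since the code of a
   list exceeds the code of its tail. *)
Definition lfold (f : nat -> nat -> nat -> nat) (prm a l : nat) : nat :=
  pi1 (Nat.iter l (lfold_step f prm) (npair a l)).

Lemma lfold_spec f prm a L : lfold f prm a (code_list L) = fold_left (f prm) L a.
Proof.
  enough (H : forall L a k, code_list L <= k ->
    Nat.iter k (lfold_step f prm) (npair a (code_list L)) = npair (fold_left (f prm) L a) 0).
  { unfold lfold. rewrite H; [apply pi1_npair | reflexivity]. }
  clear a L. induction L as [|x L IH]; intros a k Hk.
  - clear Hk. simpl. induction k as [|k IHk]; [reflexivity|].
    simpl. rewrite IHk. unfold lfold_step. rewrite pi2_npair. reflexivity.
  - destruct k as [|k]; [simpl in Hk; lia|].
    rewrite Nat.iter_succ_r. unfold lfold_step at 2. simpl code_list. rewrite pi2_npair.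
    simpl. autorewrite with pairing. apply IH.
    pose proof (le_npair x (code_list L)). simpl in Hk. lia.
Qed.

Lemma computable3_lfold f : computable3 f -> computable3 (lfold f).
Proof.
  intros Hf.
  assert (Hiter : computable3 (fun n prm a => Nat.iter n (lfold_step f prm) a)).
  { apply computable_iter. unfold lfold_step. computable_tac. }
  unfold computable3, lfold. apply (computable_comp pi1); [computable_tac|].
  apply (computable_op3 _ (fun z => pi2 (pi2 z)) pi1
           (fun z => npair (pi1 (pi2 z)) (pi2 (pi2 z))) Hiter); computable_tac.
Qed.

#[export] Hint Extern 1 (computable3 (lfold _)) =>
  apply computable3_lfold; computable_tac : computable.

Definition lall (p : nat -> nat -> nat) (prm l : nat) : nat :=
  lfold (fun prm acc e => acc * p prm e) prm 1 l.
Definition lex (p : nat -> nat -> nat) (prm l : nat) : nat :=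
  lfold (fun prm acc e => acc + p prm e) prm 0 l.
Definition lrev (l : nat) : nat := lfold (fun _ acc e => S (npair e acc)) 0 0 l.
Definition lmap (p : nat -> nat -> nat) (prm l : nat) : nat :=
  lrev (lfold (fun prm acc e => S (npair (p prm e) acc)) prm 0 l).
Definition llen (l : nat) : nat := lfold (fun _ acc _ => S acc) 0 0 l.
Definition lmem (l e : nat) : nat := lex eq_test e l.
Definition ltail (l : nat) : nat := pi2 (pred l).
Definition ldrop (i l : nat) : nat := Nat.iter i ltail l.
Definition lnth (l i : nat) : nat := pi1 (pred (ldrop i l)).
Definition look (t a : nat) : nat :=
  lfold (fun a acc e => cond (eq_test (pi1 e) a) (pi2 e) acc) a 0 t.

Lemma lall_spec p prm L :
  lall p prm (code_list L) <> 0 <-> forall e, In e L -> p prm e <> 0.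
Proof.
  unfold lall. rewrite lfold_spec.
  enough (H : forall a, fold_left (fun acc e => acc * p prm e) L a <> 0 <->
                        a <> 0 /\ forall e, In e L -> p prm e <> 0)
    by (rewrite H; split; [tauto | split; [lia | assumption]]).
  induction L as [|x L IH]; intros a; simpl; [intuition|].
  rewrite IH, mul_neq_0. split.
  - intros [[Ha Hx] HL]. split; [exact Ha|]. intros e [<- | He]; auto.
  - intros [Ha HL]. auto.
Qed.

Lemma lex_spec p prm L :
  lex p prm (code_list L) <> 0 <-> exists e, In e L /\ p prm e <> 0.
Proof.
  unfold lex. rewrite lfold_spec.
  enough (H : forall a, fold_left (fun acc e => acc + p prm e) L a <> 0 <->
                        a <> 0 \/ exists e, In e L /\ p prm e <> 0)
    by (rewrite H; split; [intros [Ha | He]; [lia | exact He] | auto]).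
  induction L as [|x L IH]; intros a; simpl.
  - split; [auto | intros [Ha | [e [[] _]]]; exact Ha].
  - rewrite IH. split.
    + intros [Ha | [e [He Hpe]]]; [| eauto].
      destruct (Nat.eq_dec (p prm x) 0); [left | right; exists x]; auto; lia.
    + intros [Ha | [e [[<- | He] Hpe]]]; [left; lia | left; lia | eauto].
Qed.

Lemma lmem_spec L e : lmem (code_list L) e <> 0 <-> In e L.
Proof.
  unfold lmem. rewrite lex_spec. setoid_rewrite eq_test_neq_0.
  split; [intros [x [Hx <-]] | intros He; exists e]; auto.
Qed.

Lemma llen_spec L : llen (code_list L) = length L.
Proof.
  unfold llen. rewrite lfold_spec, <- (Nat.add_0_r (length L)).
  generalize 0. induction L as [|x L IH]; intros a; simpl; [reflexivity|].
  rewrite IH. lia.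
Qed.

Lemma ltail_spec L : ltail (code_list L) = code_list (tl L).
Proof. destruct L as [|x L]; [reflexivity|]. apply pi2_npair. Qed.

Lemma ldrop_spec i L : ldrop i (code_list L) = code_list (skipn i L).
Proof.
  revert L. induction i as [|i IH]; intros L; [reflexivity|].
  unfold ldrop in *. rewrite Nat.iter_succ_r, ltail_spec, IH.
  destruct L; simpl; [rewrite skipn_nil|]; reflexivity.
Qed.

Lemma lnth_spec L i : lnth (code_list L) i = nth i L 0.
Proof.
  unfold lnth. rewrite ldrop_spec. revert L. induction i as [|i IH]; intros [|x L]; simpl;
    try reflexivity; [apply pi1_npair | apply IH].
Qed.

Lemma lrev_spec L : lrev (code_list L) = code_list (rev L).
Proof.
  unfold lrev. rewrite lfold_spec, <- (app_nil_r (rev L)).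
  change 0 with (code_list []). generalize (@nil nat).
  induction L as [|x L IH]; intros A; simpl; [reflexivity|].
  rewrite <- app_assoc. apply (IH (x :: A)).
Qed.

Lemma lmap_spec p prm L : lmap p prm (code_list L) = code_list (map (p prm) L).
Proof.
  unfold lmap. rewrite lfold_spec.
  enough (H : forall A, fold_left (fun acc e => S (npair (p prm e) acc)) L (code_list A) =
                        code_list (rev (map (p prm) L) ++ A)).
  { change 0 with (code_list []). rewrite (H []), app_nil_r, lrev_spec, rev_involutive.
    reflexivity. }
  induction L as [|x L IH]; intros A; simpl; [reflexivity|].
  rewrite <- app_assoc. apply (IH (p prm x :: A)).
Qed.

Lemma look_spec L a :
  ((forall e, In e L -> pi1 e <> a) /\ look (code_list L) a = 0) \/
  (exists e, In e L /\ pi1 e = a /\ look (code_list L) a = pi2 e).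
Proof.
  unfold look. rewrite lfold_spec. generalize 0.
  induction L as [|x L IH]; intros acc; simpl; [left; split; auto; intros e []|].
  destruct (IH (cond (eq_test (pi1 x) a) (pi2 x) acc)) as [[Hnot ->] | [e [He [Hea ->]]]].
  - unfold eq_test, Nat.b2n. destruct (Nat.eqb_spec (pi1 x) a) as [Hx | Hx]; simpl.
    + right. exists x. auto.
    + left. split; [intros e [<- | He]; auto | reflexivity].
  - right. exists e. auto.
Qed.

Lemma computable2_lall p : computable2 p -> computable2 (lall p).
Proof. intros Hp. unfold lall. computable_tac. Qed.

Lemma computable2_lex p : computable2 p -> computable2 (lex p).
Proof. intros Hp. unfold lex. computable_tac. Qed.

Lemma computable_lrev : computable lrev.
Proof. unfold lrev. computable_tac. Qed.

#[export] Hint Resolve computable_lrev : computable.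

Lemma computable2_lmap p : computable2 p -> computable2 (lmap p).
Proof. intros Hp. unfold lmap. computable_tac. Qed.

#[export] Hint Extern 1 (computable2 (lall _)) =>
  apply computable2_lall; computable_tac : computable.
#[export] Hint Extern 1 (computable2 (lex _)) =>
  apply computable2_lex; computable_tac : computable.
#[export] Hint Extern 1 (computable2 (lmap _)) =>
  apply computable2_lmap; computable_tac : computable.

Lemma computable_llen : computable llen.
Proof. unfold llen. computable_tac. Qed.

Lemma computable2_lmem : computable2 lmem.
Proof. unfold lmem. computable_tac. Qed.

Lemma computable2_lnth : computable2 lnth.
Proof.
  assert (Hdrop : computable3 (fun n (_ : nat) l => Nat.iter n ltail l)).
  { apply (computable_iter (fun _ => ltail)). unfold ltail. computable_tac. }
  unfold computable2, lnth, ldrop.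
  apply (computable_comp (fun l => pi1 (pred l))); [computable_tac|].
  apply (computable_op3 _ pi2 (fun _ => 0) pi1 Hdrop); computable_tac.
Qed.

Lemma computable2_look : computable2 look.
Proof. unfold look. computable_tac. Qed.

#[export] Hint Resolve computable_llen computable2_lmem computable2_lnth computable2_look
  : computable.

Definition has_key (t a : nat) : nat := lex (fun a e => eq_test (pi1 e) a) a t.

Lemma has_key_spec L a : has_key (code_list L) a <> 0 <-> exists e, In e L /\ pi1 e = a.
Proof. unfold has_key. rewrite lex_spec. setoid_rewrite eq_test_neq_0. reflexivity. Qed.

Lemma computable2_has_key : computable2 has_key.
Proof. unfold has_key. computable_tac. Qed.

#[export] Hint Resolve computable2_has_key : computable.

Lemma In_code_list_lt e L : In e L -> e < code_list L.
Proof.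
  induction L as [|x L IH]; simpl; [intros []|].
  pose proof (le_npair x (code_list L)). intros [<- | He]; [| specialize (IH He)]; lia.
Qed.

Lemma code_list_surj n : exists L, code_list L = n.
Proof.
  induction n as [n IH] using lt_wf_ind. destruct n as [|m]; [exists []; reflexivity|].
  pose proof (npair_pi m) as Em. pose proof (le_npair (pi1 m) (pi2 m)) as Hle.
  destruct (IH (pi2 m)) as [L HL]; [lia|].
  exists (pi1 m :: L). simpl. rewrite HL, Em. reflexivity.
Qed.

Fixpoint decode_list_fuel (fuel l : nat) : list nat :=
  match fuel, l with
  | S fuel', S m => pi1 m :: decode_list_fuel fuel' (pi2 m)
  | _, _ => []
  end.

Definition decode_list (l : nat) : list nat := decode_list_fuel l l.

Lemma decode_list_fuel_code fuel L :
  code_list L <= fuel -> decode_list_fuel fuel (code_list L) = L.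
Proof.
  revert fuel. induction L as [|x L IH]; intros [|fuel] Hfuel; simpl in *; try reflexivity; [lia|].
  autorewrite with pairing. rewrite IH; [reflexivity|].
  pose proof (le_npair x (code_list L)). lia.
Qed.

Lemma decode_list_code L : decode_list (code_list L) = L.
Proof. apply decode_list_fuel_code. reflexivity. Qed.

Lemma computable_code_list_map (fs : list (nat -> nat)) :
  (forall f, In f fs -> computable f) -> computable (fun x => code_list (map (fun f => f x) fs)).
Proof.
  induction fs as [|f fs IH]; intros Hfs; simpl; [computable_tac|].
  apply (computable_comp S); [computable_tac|].
  apply computable_npair; [apply Hfs; left | apply IH; intros g Hg; apply Hfs; right]; auto.
Qed.

Definition select (fs : list (nat -> nat)) (i x : nat) : nat := nth i (map (fun f => f x) fs) 0.

Lemma computable2_select fs : (forall f, In f fs -> computable f) -> computable2 (select fs).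
Proof.
  intros Hfs. apply computable_ext with
    (g := fun z => lnth (code_list (map (fun f => f (pi2 z)) fs)) (pi1 z)).
  - intros z. rewrite lnth_spec. reflexivity.
  - apply (computable_op2 lnth (fun z => code_list (map (fun f => f (pi2 z)) fs)) pi1);
      [computable_tac | | computable_tac].
    apply (computable_comp (fun x => code_list (map (fun f => f x) fs)) pi2);
      [apply computable_code_list_map, Hfs | computable_tac].
Qed.

Lemma select_map {A} (g : A -> nat -> nat) As d i x :
  i < length As -> select (map g As) i x = g (nth i As d) x.
Proof.
  intros Hi. unfold select. rewrite map_map.
  rewrite nth_indep with (d' := g d x) by (rewrite length_map; exact Hi).
  apply (map_nth (fun a => g a x)).
Qed.

Fixpoint form_nested_ind (P : form -> Prop) (HV : forall n, P (Var n))
  (HA : forall c args, (forall G, In G args -> P G) -> P (App c args)) (F : form) : P F :=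
  match F with
  | Var n => HV n
  | App c args =>
      HA c args ((fix go (l : list form) : forall G, In G l -> P G :=
        match l with
        | [] => fun G (H : In G []) => match H with end
        | G' :: l' => fun G H =>
            match H with
            | or_introl E => eq_ind G' P (form_nested_ind P HV HA G') G E
            | or_intror H' => go l' G H'
            end
        end) args)
  end.

Lemma wf_App ar c args :
  wf ar (App c args) <->
  c < length ar /\ length args = nth c ar 0 /\ (forall G, In G args -> wf ar G).
Proof.
  simpl. enough (E : forall l, (fix wfs (l : list form) : Prop :=
      match l with [] => True | G :: l' => wf ar G /\ wfs l' end) l <->
      (forall G, In G l -> wf ar G)) by (rewrite E; reflexivity).
  induction l as [|G l IH]; simpl; [split; [intros _ G [] | auto]|].
  rewrite IH. split; [intros [HG Hl] G' [<- | HG']; auto | auto].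
Qed.

Lemma code_list_inj L1 L2 : code_list L1 = code_list L2 -> L1 = L2.
Proof.
  revert L2. induction L1 as [|x L1 IH]; intros [|y L2] H; simpl in H;
    try discriminate; [reflexivity|].
  injection H as H. apply npair_inj in H as [-> H]. f_equal. apply IH, H.
Qed.

Lemma code_form_inj F G : code_form F = code_form G -> F = G.
Proof.
  revert G. induction F as [n | c args IH] using form_nested_ind;
    intros [m | c' args'] H; simpl in H; apply npair_inj in H as [Hc Hargs]; try discriminate.
  - congruence.
  - injection Hc as <-. f_equal. apply code_list_inj in Hargs. clear c.
    revert args' Hargs. induction args as [|a args IHargs]; intros [|a' args'] Hargs;
      simpl in Hargs; try discriminate; [reflexivity|].
    injection Hargs as Ha Hargs. f_equal.
    + apply IH; [left |]; auto.
    + apply IHargs; [intros G HG; apply IH; right |]; auto.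
Qed.

Lemma codes_of_wf_forms ar Ls :
  (forall e, In e Ls -> exists G, wf ar G /\ code_form G = e) ->
  exists Gs, map code_form Gs = Ls /\ (forall G, In G Gs -> wf ar G).
Proof.
  induction Ls as [|e Ls IH]; intros H; [exists []; split; [reflexivity | intros G []]|].
  destruct (H e (or_introl eq_refl)) as [G [WG <-]].
  destruct IH as [Gs [EGs WGs]]; [intros e' He'; apply H; right; exact He'|].
  exists (G :: Gs). split; [simpl; rewrite EGs; reflexivity | intros G' [<- | HG']; auto].
Qed.

Fixpoint subst_code (sg : nat -> nat) (F : form) : nat :=
  match F with
  | Var n => sg n
  | App c args => npair (S c) (code_list (map (subst_code sg) args))
  end.

Lemma code_form_subst s F :
  code_form (subst s F) = subst_code (fun n => code_form (s n)) F.
Proof.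
  induction F as [n | c args IH] using form_nested_ind; simpl; [reflexivity|].
  rewrite map_map. do 2 f_equal. apply map_ext_in. exact IH.
Qed.

Lemma le_list_max x l : In x l -> x <= list_max l.
Proof.
  intros Hx. pose proof (proj1 (list_max_le l (list_max l)) (le_n _)) as Hl.
  rewrite Forall_forall in Hl. auto.
Qed.

Fixpoint var_bound (F : form) : nat :=
  match F with Var n => S n | App _ args => list_max (map var_bound args) end.

Lemma subst_code_ext sg sg' F :
  (forall n, n < var_bound F -> sg n = sg' n) -> subst_code sg F = subst_code sg' F.
Proof.
  induction F as [n | c args IH] using form_nested_ind; simpl; intros H; [apply H; lia|].
  do 2 f_equal. apply map_ext_in. intros a Ha. apply IH; [exact Ha|].
  intros n Hn. apply H. eapply Nat.lt_le_trans; [exact Hn|].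
  apply le_list_max, in_map, Ha.
Qed.

Lemma computable_subst_code F : computable (fun t => subst_code (lnth t) F).
Proof.
  induction F as [n | c args IH] using form_nested_ind; simpl; [computable_tac|].
  apply computable_npair; [computable_tac|].
  set (fs := map (fun a t => subst_code (lnth t) a) args).
  apply computable_ext with (g := fun t => code_list (map (fun f => f t) fs)).
  - intros t. unfold fs. rewrite map_map. reflexivity.
  - apply computable_code_list_map. intros f Hf.
    apply in_map_iff in Hf as [a [<- Ha]]. apply IH, Ha.
Qed.

Fixpoint subformulas (F : form) : list form :=
  F :: match F with Var _ => [] | App _ args => concat (map subformulas args) end.

Lemma subformulas_refl F : In F (subformulas F).
Proof. destruct F; left; reflexivity. Qed.

Lemma subformulas_trans F G H :
  In G (subformulas F) -> In H (subformulas G) -> In H (subformulas F).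
Proof.
  revert G. induction F as [n | c args IH] using form_nested_ind; intros G HG HH;
    destruct HG as [<- | HG]; auto; [contradiction|].
  right. apply in_concat in HG as [l [Hl HG]]. apply in_map_iff in Hl as [a [<- Ha]].
  apply in_concat. exists (subformulas a). split; [apply in_map, Ha | apply (IH a Ha G HG HH)].
Qed.

Lemma subformulas_arg F c args a :
  In (App c args) (subformulas F) -> In a args -> In a (subformulas F).
Proof.
  intros Happ Ha. apply (subformulas_trans _ _ _ Happ). right.
  apply in_concat. exists (subformulas a). split; [apply in_map, Ha | apply subformulas_refl].
Qed.

Lemma wf_subformulas ar F G : wf ar F -> In G (subformulas F) -> wf ar G.
Proof.
  revert G. induction F as [n | c args IH] using form_nested_ind; intros G WF [<- | HG]; auto;
    [contradiction|].
  apply wf_App in WF as (_ & _ & Wargs).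
  apply in_concat in HG as [l [Hl HG]]. apply in_map_iff in Hl as [a [<- Ha]].
  apply (IH a Ha G (Wargs a Ha) HG).
Qed.

Definition semidecidable (ar : language) (S : form -> Prop) : Prop :=
  exists chk, computable2 chk /\
    forall F, wf ar F -> (S F <-> exists w, chk w (code_form F) <> 0).

Lemma semidecidable_ext ar (S S' : form -> Prop) :
  (forall F, wf ar F -> (S F <-> S' F)) -> semidecidable ar S -> semidecidable ar S'.
Proof.
  intros E [chk [Hchk Hspec]]. exists chk. split; [exact Hchk|].
  intros F WF. rewrite <- E by exact WF. apply Hspec, WF.
Qed.

Lemma decidable_of_semidecidable ar (S : form -> Prop) :
  semidecidable ar S -> semidecidable ar (fun F => ~ S F) -> decidable_set ar S.
Proof.
  intros [pos [Hpos Spos]] [neg [Hneg Sneg]].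
  (* Search in parallel for a witness [npair 0 w] of membership and a witness
     [npair (S _) w] of non-membership. *)
  set (chk := fun n x => cond (pi1 n) (neg (pi2 n) x) (pos (pi2 n) x)).
  destruct (computable_search (fun z => eq_test (chk (pi1 z) (pi2 z)) 0)) as [ps Hps];
    [unfold chk; computable_tac|].
  assert (Hout : computable (fun n => cond (pi1 n) 0 1)) by computable_tac.
  destruct Hout as [po Hpo]. exists (RComp po [ps]). intros F WF.
  destruct (Hps (code_form F)) as [n [Hn Hsearch]].
  - unfold chk. destruct (classic (S F)) as [HS | HS].
    + destruct (proj1 (Spos F WF) HS) as [w Hw]. exists (npair 0 w).
      autorewrite with pairing. apply eq_test_eq_0, Hw.
    + destruct (proj1 (Sneg F WF) HS) as [w Hw]. exists (npair 1 w).
      autorewrite with pairing. apply eq_test_eq_0, Hw.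
  - autorewrite with pairing in Hn. apply eq_test_eq_0 in Hn. unfold chk in Hn.
    exists (pi1 n =? 0). split.
    + apply reval_comp1 with n; [exact Hsearch|].
      replace (if pi1 n =? 0 then 1 else 0) with (cond (pi1 n) 0 1)
        by (destruct (pi1 n); reflexivity).
      apply Hpo.
    + destruct (pi1 n); simpl in Hn |- *.
      * split; [intros _ | reflexivity]. apply Spos; eauto.
      * split; [discriminate | intros HS]. exfalso. apply (proj2 (Sneg F WF)); eauto.
Qed.

(** * Derivations *)

Section Derivations.

Variable ar : language.
Variable C : calculus.

(* A table [K] of codes of well-formed formulas: every entry codes a variable
   or an application of a connective to the right number of entries of [K]. *)
Definition wf_entry (K k : nat) : nat :=
  cond (pi1 k)
    (lt_test (pred (pi1 k)) (length ar) *
     eq_test (llen (pi2 k)) (lnth (code_list ar) (pred (pi1 k))) * lall lmem K (pi2 k))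
    1.

Definition wf_table (K : nat) : nat := lall wf_entry K K.

Lemma computable_wf_table : computable wf_table.
Proof. unfold wf_table, wf_entry. computable_tac. Qed.

Definition codes_wf (KL : list nat) : Prop :=
  forall k, In k KL -> exists G, wf ar G /\ code_form G = k.

Lemma wf_table_sound KL : wf_table (code_list KL) <> 0 -> codes_wf KL.
Proof.
  unfold wf_table. rewrite lall_spec. intros Htable k.
  induction k as [k IH] using lt_wf_ind. intros Hk. specialize (Htable k Hk).
  pose proof (npair_pi k) as Ek. unfold wf_entry in Htable.
  destruct (pi1 k) as [|c] eqn:Ec; [exists (Var (pi2 k)); split; [exact I | exact Ek]|].
  simpl in Htable. autorewrite with nonzero in Htable. destruct Htable as [[Hc Hlen] Hargs].
  destruct (code_list_surj (pi2 k)) as [Ls ELs]. rewrite <- ELs in *.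
  rewrite llen_spec, lnth_spec in Hlen. rewrite lall_spec in Hargs.
  destruct (codes_of_wf_forms ar Ls) as [Gs [EGs WGs]].
  { intros e He. apply IH; [| apply lmem_spec, Hargs, He].
    pose proof (In_code_list_lt e Ls He). pose proof (le_npair (S c) (code_list Ls)). lia. }
  exists (App c Gs). split.
  - apply wf_App. rewrite <- Hlen, <- EGs, length_map. auto.
  - simpl. rewrite EGs. exact Ek.
Qed.

Definition wf_closed (Gs : list form) : Prop :=
  (forall G, In G Gs -> wf ar G) /\
  (forall c args a, In (App c args) Gs -> In a args -> In a Gs).

Lemma wf_table_complete Gs : wf_closed Gs -> wf_table (code_list (map code_form Gs)) <> 0.
Proof.
  intros [WGs HGs]. unfold wf_table. rewrite lall_spec. intros k Hk.
  apply in_map_iff in Hk as [G [<- HG]]. unfold wf_entry.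
  destruct G as [n | c args]; simpl; autorewrite with pairing; simpl; [lia|].
  destruct (proj1 (wf_App ar c args) (WGs _ HG)) as (Hc & Hlen & _).
  autorewrite with nonzero. rewrite llen_spec, lnth_spec, lall_spec, length_map.
  split; [split; assumption|]. intros e He. apply lmem_spec.
  apply in_map_iff in He as [a [<- Ha]]. apply in_map, (HGs c args); assumption.
Qed.

Lemma wf_closed_app Gs1 Gs2 : wf_closed Gs1 -> wf_closed Gs2 -> wf_closed (Gs1 ++ Gs2).
Proof.
  intros [W1 H1] [W2 H2]. split.
  - intros G HG. apply in_app_or in HG as [HG | HG]; auto.
  - intros c args a Happ Ha. apply in_or_app.
    apply in_app_or in Happ as [Happ | Happ]; [left; eapply H1 | right; eapply H2]; eassumption.
Qed.

(* A step [npair kind (npair idx t)] instantiates axiom [idx] (if [kind = 0])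
   or rule [idx] (otherwise) by the substitution sending variable [n] to the
   formula coded by [lnth t n]. *)
Definition instances (As : list form) (t : nat) : nat :=
  code_list (map (fun A => subst_code (lnth t) A) As).

Definition step_conclusion (st : nat) : nat :=
  cond (pi1 st)
    (select (map (fun r t => subst_code (lnth t) (snd r)) (rules C)) (pi1 (pi2 st)) (pi2 (pi2 st)))
    (select (map (fun A t => subst_code (lnth t) A) (axioms C)) (pi1 (pi2 st)) (pi2 (pi2 st))).

Definition step_premises (st : nat) : nat :=
  select (map (fun r => instances (fst r)) (rules C)) (pi1 (pi2 st)) (pi2 (pi2 st)).

Definition step_ok (K prev st : nat) : nat :=
  lall lmem K (pi2 (pi2 st)) *
  cond (pi1 st)
    (lt_test (pi1 (pi2 st)) (length (rules C)) * lall lmem prev (step_premises st))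
    (lt_test (pi1 (pi2 st)) (length (axioms C))).

(* The state is [npair prev ok], with [prev] the codes of the conclusions so
   far, latest first. *)
Definition derive_step (K s st : nat) : nat :=
  npair (S (npair (step_conclusion st) (pi1 s))) (pi2 s * step_ok K (pi1 s) st).

Definition derivation_check (w x : nat) : nat :=
  let run := lfold derive_step (pi1 w) (npair 0 1) (pi2 w) in
  wf_table (pi1 w) * pi2 run * lmem (pi1 run) x.

Lemma computable_instances As : computable (instances As).
Proof.
  unfold instances. apply computable_ext with
    (g := fun t => code_list (map (fun f => f t) (map (fun A t => subst_code (lnth t) A) As))).
  - intros t. rewrite map_map. reflexivity.
  - apply computable_code_list_map. intros f Hf.
    apply in_map_iff in Hf as [A [<- _]]. apply computable_subst_code.
Qed.

Lemma computable2_derivation_check : computable2 derivation_check.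
Proof.
  assert (computable2 (select (map (fun r t => subst_code (lnth t) (snd r)) (rules C))))
    by (apply computable2_select; intros f Hf; apply in_map_iff in Hf as [r [<- _]];
        apply computable_subst_code).
  assert (computable2 (select (map (fun A t => subst_code (lnth t) A) (axioms C))))
    by (apply computable2_select; intros f Hf; apply in_map_iff in Hf as [A [<- _]];
        apply computable_subst_code).
  assert (computable2 (select (map (fun r => instances (fst r)) (rules C))))
    by (apply computable2_select; intros f Hf; apply in_map_iff in Hf as [r [<- _]];
        apply computable_instances).
  pose proof computable_wf_table.
  unfold derivation_check, derive_step, step_ok, step_premises, step_conclusion. computable_tac.
Qed.

Lemma subst_of_table KL t :
  codes_wf KL -> lall lmem (code_list KL) t <> 0 ->
  exists s, wf_subst ar s /\ forall A, subst_code (lnth t) A = code_form (subst s A).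
Proof.
  intros HK Ht. destruct (code_list_surj t) as [TL <-]. rewrite lall_spec in Ht.
  destruct (functional_choice (fun n G => wf ar G /\ code_form G = lnth (code_list TL) n))
    as [s Hs].
  { intros n. rewrite lnth_spec. destruct (Nat.lt_ge_cases n (length TL)) as [Hn | Hn].
    - apply HK, lmem_spec, Ht, nth_In, Hn.
    - rewrite nth_overflow by exact Hn. exists (Var 0). split; [exact I | reflexivity]. }
  exists s. split; [intros n; apply Hs|].
  intros A. rewrite code_form_subst. apply subst_code_ext. intros n _. symmetry. apply Hs.
Qed.

Definition derived_codes (d : list form) : nat := code_list (rev (map code_form d)).

Lemma derived_codes_snoc d G :
  derived_codes (d ++ [G]) = S (npair (code_form G) (derived_codes d)).
Proof. unfold derived_codes. rewrite map_app, rev_app_distr. reflexivity. Qed.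

Lemma in_rev_map_code_form d G : In (code_form G) (rev (map code_form d)) <-> In G d.
Proof.
  rewrite <- in_rev. split; [| apply in_map].
  intros HG. apply in_map_iff in HG as [G' [E HG']]. apply code_form_inj in E. subst. exact HG'.
Qed.

Lemma derivation_snoc d G :
  derivation ar C (d ++ [G]) <-> derivation ar C d /\ deriv_step ar C d G.
Proof.
  assert (Hprefix : forall i, i <= length d -> firstn i (d ++ [G]) = firstn i d).
  { intros i Hi. rewrite firstn_app. replace (i - length d) with 0 by lia. apply app_nil_r. }
  split.
  - intros H. split.
    + intros i Hi. specialize (H i). rewrite Hprefix, app_nth1 in H by lia.
      apply H. rewrite length_app. simpl. lia.
    + specialize (H (length d)). rewrite Hprefix, firstn_all, app_nth2, Nat.sub_diag in H by lia.
      apply H. rewrite length_app. simpl. lia.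
  - intros [Hd HG] i Hi. rewrite length_app in Hi. simpl in Hi. rewrite Hprefix by lia.
    destruct (Nat.eq_dec i (length d)) as [-> | Hne].
    + rewrite firstn_all, app_nth2, Nat.sub_diag by lia. exact HG.
    + rewrite app_nth1 by lia. apply Hd. lia.
Qed.

Lemma step_sound KL d0 st :
  codes_wf KL -> step_ok (code_list KL) (derived_codes d0) st <> 0 ->
  exists G, code_form G = step_conclusion st /\ deriv_step ar C d0 G.
Proof.
  intros HK Hok. unfold step_ok, step_conclusion in *.
  autorewrite with nonzero in Hok. destruct Hok as [Ht Hkind].
  destruct (subst_of_table KL _ HK Ht) as [s [Ws Hs]].
  destruct (pi1 st) as [|kind]; simpl in Hkind |- *.
  - apply lt_test_neq_0 in Hkind. rewrite (select_map _ _ (Var 0)), Hs by exact Hkind.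
    eexists; split; [reflexivity|].
    left. exists (nth (pi1 (pi2 st)) (axioms C) (Var 0)), s. auto using nth_In.
  - autorewrite with nonzero in Hkind. destruct Hkind as [Hidx Hprem].
    unfold step_premises in Hprem.
    rewrite (select_map _ _ ([], Var 0)) in Hprem by exact Hidx.
    rewrite (select_map _ _ ([], Var 0)), Hs by exact Hidx.
    eexists; split; [reflexivity|].
    right. exists (nth (pi1 (pi2 st)) (rules C) ([], Var 0)), s.
    repeat split; auto using nth_In. intros A HA.
    unfold instances in Hprem. rewrite lall_spec in Hprem.
    specialize (Hprem _ (in_map _ _ _ HA)). rewrite Hs in Hprem.
    apply in_rev_map_code_form, lmem_spec, Hprem.
Qed.

Lemma derive_steps_fail K DL prev :
  pi2 (fold_left (derive_step K) DL (npair prev 0)) = 0.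
Proof.
  revert prev. induction DL as [|st DL IH]; intros prev; simpl; [apply pi2_npair|].
  unfold derive_step at 2. autorewrite with pairing. apply IH.
Qed.

Lemma derive_steps_sound KL DL d0 ok :
  codes_wf KL -> derivation ar C d0 ->
  pi2 (fold_left (derive_step (code_list KL)) DL (npair (derived_codes d0) ok)) <> 0 ->
  exists d, derivation ar C d /\
    pi1 (fold_left (derive_step (code_list KL)) DL (npair (derived_codes d0) ok)) =
    derived_codes d.
Proof.
  intros HK. revert d0 ok. induction DL as [|st DL IH]; intros d0 ok Hd0 Hok; simpl in *.
  - exists d0. split; [exact Hd0 | apply pi1_npair].
  - unfold derive_step at 2 in Hok. unfold derive_step at 2.
    autorewrite with pairing in Hok |- *.
    destruct (Nat.eq_dec (ok * step_ok (code_list KL) (derived_codes d0) st) 0) as [E | E].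
    { rewrite E, derive_steps_fail in Hok. contradiction. }
    apply mul_neq_0 in E as [_ Hstep].
    destruct (step_sound KL d0 st HK Hstep) as [G [EG HG]].
    rewrite <- EG, <- derived_codes_snoc in Hok |- *.
    apply IH; [apply derivation_snoc; split |]; assumption.
Qed.

Definition subst_table (s : nat -> form) (B : nat) : list form :=
  concat (map (fun n => subformulas (s n)) (seq 0 B)).

Definition subst_list (s : nat -> form) (B : nat) : nat :=
  code_list (map (fun n => code_form (s n)) (seq 0 B)).

Lemma wf_closed_subst_table s B : wf_subst ar s -> wf_closed (subst_table s B).
Proof.
  intros Ws. unfold subst_table. split.
  - intros G HG. apply in_concat in HG as [l [Hl HG]]. apply in_map_iff in Hl as [n [<- _]].
    apply (wf_subformulas ar (s n)); [apply Ws | exact HG].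
  - intros c args a Happ Ha. apply in_concat in Happ as [l [Hl Happ]].
    apply in_concat. exists l. split; [exact Hl|].
    apply in_map_iff in Hl as [n [<- _]]. apply (subformulas_arg _ c args); assumption.
Qed.

Lemma subst_list_in_table s B KL :
  incl (map code_form (subst_table s B)) KL -> lall lmem (code_list KL) (subst_list s B) <> 0.
Proof.
  intros HKL. unfold subst_list. rewrite lall_spec. intros e He. apply lmem_spec, HKL.
  apply in_map_iff in He as [n [<- Hn]]. apply in_map, in_concat.
  exists (subformulas (s n)). split; [apply in_map_iff; eauto | apply subformulas_refl].
Qed.

Lemma subst_code_subst_list s B A :
  var_bound A <= B -> subst_code (lnth (subst_list s B)) A = code_form (subst s A).
Proof.
  intros HB. rewrite code_form_subst. apply subst_code_ext. intros n Hn.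
  unfold subst_list. rewrite lnth_spec.
  pose proof (map_nth (fun n => code_form (s n)) (seq 0 B) 0 n) as E.
  cbv beta in E. rewrite seq_nth in E by lia.
  rewrite nth_indep with (d' := code_form (s 0)) by (rewrite length_map, length_seq; lia).
  exact E.
Qed.

Lemma step_complete d0 G :
  deriv_step ar C d0 G ->
  exists st Gs, wf_closed Gs /\ step_conclusion st = code_form G /\
    forall KL, incl (map code_form Gs) KL -> step_ok (code_list KL) (derived_codes d0) st <> 0.
Proof.
  unfold step_conclusion, step_ok.
  intros [[A [s [HA [Ws ->]]]] | [r [s [Hr [Ws [-> Hprem]]]]]].
  - destruct (In_nth _ _ (Var 0) HA) as [idx [Hidx EA]].
    exists (npair 0 (npair idx (subst_list s (var_bound A)))), (subst_table s (var_bound A)).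
    autorewrite with pairing. simpl.
    rewrite (select_map _ _ (Var 0)), EA, subst_code_subst_list by auto.
    split; [apply wf_closed_subst_table, Ws | split; [reflexivity|]].
    intros KL HKL. autorewrite with nonzero.
    split; [apply subst_list_in_table, HKL | exact Hidx].
  - destruct (In_nth _ _ ([], Var 0) Hr) as [idx [Hidx Er]].
    set (B := list_max (map var_bound (snd r :: fst r))).
    assert (HB : forall A, In A (snd r :: fst r) -> var_bound A <= B)
      by (intros A HA; apply le_list_max, in_map, HA).
    exists (npair 1 (npair idx (subst_list s B))), (subst_table s B).
    unfold step_premises, instances. autorewrite with pairing. simpl.
    rewrite !(select_map _ _ ([], Var 0)), Er, subst_code_subst_list by auto using in_eq.
    split; [apply wf_closed_subst_table, Ws | split; [reflexivity|]].
    intros KL HKL. autorewrite with nonzero. rewrite lall_spec.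
    split; [apply subst_list_in_table, HKL | split; [exact Hidx|]].
    intros e He. apply in_map_iff in He as [A [<- HA]].
    rewrite subst_code_subst_list by auto using in_cons.
    apply lmem_spec, in_rev_map_code_form, Hprem, HA.
Qed.

Lemma derive_steps_complete d :
  derivation ar C d ->
  exists DL Gs, wf_closed Gs /\ forall KL, incl (map code_form Gs) KL ->
    exists ok, fold_left (derive_step (code_list KL)) DL (npair 0 1) = npair (derived_codes d) ok
               /\ ok <> 0.
Proof.
  induction d as [|G d IH] using rev_ind; intros Hd.
  - exists [], []. split; [split; [intros G [] | intros c args a []]|].
    intros KL _. exists 1. split; [reflexivity | lia].
  - apply derivation_snoc in Hd as [Hd HG].
    destruct (IH Hd) as [DL [Gs1 [W1 Hrun]]].
    destruct (step_complete d G HG) as [st [Gs2 [W2 [Hconcl Hstep]]]].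
    exists (DL ++ [st]), (Gs1 ++ Gs2). split; [apply wf_closed_app; assumption|].
    intros KL HKL. rewrite map_app in HKL.
    destruct (Hrun KL) as [ok [Efold Hok]]; [intros k Hk; apply HKL, in_or_app; auto|].
    exists (ok * step_ok (code_list KL) (derived_codes d) st).
    rewrite fold_left_app, Efold. simpl. unfold derive_step. autorewrite with pairing.
    rewrite Hconcl, derived_codes_snoc. split; [reflexivity|].
    apply mul_neq_0. split; [exact Hok|]. apply Hstep. intros k Hk. apply HKL, in_or_app. auto.
Qed.

Lemma derivation_check_spec F :
  Thm ar C F <-> exists w, derivation_check w (code_form F) <> 0.
Proof.
  unfold derivation_check. split.
  - intros [d [Hd HF]]. destruct (derive_steps_complete d Hd) as [DL [Gs [WGs Hrun]]].
    destruct (Hrun (map code_form Gs) (incl_refl _)) as [ok [Efold Hok]].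
    exists (npair (code_list (map code_form Gs)) (code_list DL)). autorewrite with pairing.
    rewrite lfold_spec, Efold. autorewrite with pairing nonzero.
    split; [split; [apply wf_table_complete, WGs | exact Hok]|].
    apply lmem_spec, in_rev_map_code_form, HF.
  - intros [w Hw]. autorewrite with nonzero in Hw. destruct Hw as [[Htable Hok] HF].
    destruct (code_list_surj (pi1 w)) as [KL EK]. destruct (code_list_surj (pi2 w)) as [DL ED].
    rewrite <- EK, <- ED, lfold_spec in *. apply wf_table_sound in Htable.
    change (npair 0 1) with (npair (derived_codes []) 1) in *.
    destruct (derive_steps_sound KL DL [] 1 Htable) as [d [Hd Ed]];
      [intros i Hi; simpl in Hi; lia | exact Hok|].
    rewrite Ed in HF. exists d. split; [exact Hd|]. apply in_rev_map_code_form, lmem_spec, HF.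
Qed.

End Derivations.

Theorem semidecidable_Thm ar C : semidecidable ar (Thm ar C).
Proof.
  exists (derivation_check ar C). split; [apply computable2_derivation_check|].
  intros F _. apply derivation_check_spec.
Qed.

(** * Countermodels *)

Section Countermodels.

Variable ar : language.
Variable M : nat -> fvlogic.
Variables pN pD pT : recfun.
Hypothesis HN : forall i, reval pN [i] (nval (M i)).
Hypothesis HD : forall i v, v < nval (M i) -> reval pD [i; v] (if desig (M i) v then 1 else 0).
Hypothesis HT : forall i c args, c < length ar -> length args = nth c ar 0 ->
  (forall v, In v args -> v < nval (M i)) -> reval pT [i; c; code_list args] (tfun (M i) c args).
Hypothesis Hfv : forall i, is_fvlogic ar (M i).

Definition nvals (j : nat) : nat := nval (M j).

Lemma computable_nvals : computable nvals.
Proof. exists pN. apply HN. Qed.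

Hint Resolve computable_nvals : computable.

Definition designated (j v : nat) : nat :=
  cond (lt_test v (nvals j)) (Nat.b2n (desig (M j) v)) 0.

Lemma computable2_designated : computable2 designated.
Proof.
  apply (computable_guard (fun z => lt_test (pi2 z) (nvals (pi1 z)))
           (fun z => Nat.b2n (desig (M (pi1 z)) (pi2 z))) (RComp pD [prog_pi1; prog_pi2]));
    [computable_tac|].
  intros z Hz. apply lt_test_neq_0 in Hz.
  apply reval_comp2 with (pi1 z) (pi2 z); [apply reval_pi1 | apply reval_pi2 | apply HD, Hz].
Qed.

Definition args_ok (j c l : nat) : nat :=
  lt_test c (length ar) * eq_test (llen l) (lnth (code_list ar) c) *
  lall (fun j v => lt_test v (nvals j)) j l.

Definition truth_fun (j c l : nat) : nat :=
  cond (args_ok j c l) (tfun (M j) c (decode_list l)) 0.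

Lemma computable3_truth_fun : computable3 truth_fun.
Proof.
  apply (computable_guard (fun z => args_ok (pi1 z) (pi1 (pi2 z)) (pi2 (pi2 z)))
           (fun z => tfun (M (pi1 z)) (pi1 (pi2 z)) (decode_list (pi2 (pi2 z))))
           (RComp pT [prog_pi1; RComp prog_pi1 [prog_pi2]; RComp prog_pi2 [prog_pi2]]));
    [unfold args_ok; computable_tac|].
  intros z Hz. unfold args_ok in Hz. autorewrite with nonzero in Hz.
  destruct Hz as [[Hc Hlen] Hvals].
  destruct (code_list_surj (pi2 (pi2 z))) as [L EL].
  rewrite <- EL, llen_spec, lnth_spec in *. rewrite lall_spec in Hvals.
  apply reval_comp3 with (pi1 z) (pi1 (pi2 z)) (code_list L); [apply reval_pi1 | | |].
  - apply reval_comp1 with (pi2 z); [apply reval_pi2 | apply reval_pi1].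
  - rewrite EL. apply reval_comp1 with (pi2 z); apply reval_pi2.
  - rewrite decode_list_code. apply HT; [exact Hc | exact Hlen |].
    intros v Hv. apply lt_test_neq_0, Hvals, Hv.
Qed.

Hint Resolve computable2_designated computable3_truth_fun : computable.

Lemma truth_fun_code j c L :
  c < length ar -> length L = nth c ar 0 -> (forall v, In v L -> v < nvals j) ->
  truth_fun j c (code_list L) = tfun (M j) c L.
Proof.
  intros Hc Hlen Hvals. unfold truth_fun.
  assert (Hok : args_ok j c (code_list L) <> 0).
  { unfold args_ok. autorewrite with nonzero. rewrite llen_spec, lnth_spec, lall_spec.
    split; [split; assumption|]. intros v Hv. apply lt_test_neq_0, Hvals, Hv. }
  destruct (args_ok j c (code_list L)); [contradiction|].
  simpl. rewrite decode_list_code. reflexivity.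
Qed.

(* A witness [npair j TL] lists entries [npair (code_form G) v], claiming
   that [G] takes the value [v] in [M j] under the valuation read off the
   entries for variables; each claim is checked against the arguments' entries. *)
Definition entry_ok (w e : nat) : nat :=
  lt_test (pi2 e) (nvals (pi1 w)) * eq_test (look (pi2 w) (pi1 e)) (pi2 e) *
  cond (pi1 (pi1 e))
    (lall has_key (pi2 w) (pi2 (pi1 e)) *
     eq_test (pi2 e) (truth_fun (pi1 w) (pred (pi1 (pi1 e))) (lmap look (pi2 w) (pi2 (pi1 e)))))
    1.

Definition countermodel_check (w x : nat) : nat :=
  lall entry_ok w (pi2 w) * has_key (pi2 w) x * (1 - designated (pi1 w) (look (pi2 w) x)).

Lemma computable2_countermodel_check : computable2 countermodel_check.
Proof. unfold countermodel_check, entry_ok. computable_tac. Qed.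

Definition table_ok (j : nat) (TL : list nat) : Prop :=
  forall e, In e TL -> entry_ok (npair j (code_list TL)) e <> 0.

Lemma table_look_lt j TL a :
  table_ok j TL -> has_key (code_list TL) a <> 0 -> look (code_list TL) a < nvals j.
Proof.
  intros Hok Ha. apply has_key_spec in Ha as [e [He Hea]].
  destruct (look_spec TL a) as [[Hnot _] | [e' [He' [_ ->]]]]; [exfalso; apply (Hnot e He Hea)|].
  specialize (Hok e' He'). unfold entry_ok in Hok. autorewrite with pairing nonzero in Hok. tauto.
Qed.

Lemma table_value j TL G :
  table_ok j TL -> wf ar G -> has_key (code_list TL) (code_form G) <> 0 ->
  value (M j) (fun n => look (code_list TL) (code_form (Var n))) G =
  look (code_list TL) (code_form G).
Proof.
  intros Hok. induction G as [n | c args IH] using form_nested_ind; intros WG HG; [reflexivity|].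
  apply wf_App in WG as (Hc & Hlen & Wargs).
  pose proof HG as [e [He Ee]]%has_key_spec. pose proof (Hok e He) as Hentry.
  unfold entry_ok in Hentry. rewrite Ee in Hentry. simpl code_form in Hentry.
  autorewrite with pairing nonzero in Hentry. simpl in Hentry. autorewrite with nonzero in Hentry.
  destruct Hentry as [[_ Hlook] [Hkeys Hval]]. rewrite lall_spec in Hkeys.
  rewrite lmap_spec, map_map in Hval.
  assert (Hargs : forall a, In a args -> has_key (code_list TL) (code_form a) <> 0)
    by (intros a Ha; apply Hkeys, in_map, Ha).
  simpl value. rewrite (map_ext_in _ (fun a => look (code_list TL) (code_form a)) args)
    by (intros a Ha; apply IH; auto).
  simpl code_form. rewrite Hlook, Hval, truth_fun_code.
  - reflexivity.
  - exact Hc.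
  - rewrite length_map. exact Hlen.
  - intros v Hv. apply in_map_iff in Hv as [a [<- Ha]]. apply (table_look_lt j), Hargs, Ha.
    exact Hok.
Qed.

Lemma value_lt j val G :
  valuation (M j) val -> wf ar G -> value (M j) val G < nvals j.
Proof.
  intros Hval. induction G as [n | c args IH] using form_nested_ind; intros WG; [apply Hval|].
  apply wf_App in WG as (Hc & Hlen & Wargs). simpl.
  apply Hfv; [exact Hc | rewrite length_map; exact Hlen |].
  intros v Hv. apply in_map_iff in Hv as [a [<- Ha]]. apply IH, Wargs; exact Ha.
Qed.

Lemma countermodel_check_sound w F :
  wf ar F -> countermodel_check w (code_form F) <> 0 -> ~ Taut ar (M (pi1 w)) F.
Proof.
  intros WF Hw. unfold countermodel_check in Hw. autorewrite with nonzero in Hw.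
  destruct Hw as [[Hentries HF] Hundesig].
  set (j := pi1 w) in *. destruct (code_list_surj (pi2 w)) as [TL ET].
  assert (Hok : table_ok j TL).
  { intros e He. rewrite ET. unfold j. rewrite npair_pi. rewrite <- ET, lall_spec in Hentries.
    apply Hentries, He. }
  rewrite <- ET in *.
  set (val := fun n => look (code_list TL) (code_form (Var n))).
  assert (HFlt : look (code_list TL) (code_form F) < nvals j) by (apply table_look_lt; assumption).
  assert (Hval : valuation (M j) val).
  { intros n. unfold val.
    destruct (look_spec TL (code_form (Var n))) as [[_ E] | [e [He [Hkey _]]]].
    - rewrite E. unfold nvals in HFlt. lia.
    - apply table_look_lt; [exact Hok | apply has_key_spec; eauto]. }
  intros [_ Htaut]. specialize (Htaut val Hval). unfold satisfies, val in Htaut.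
  rewrite (table_value j TL F Hok WF HF) in Htaut.
  unfold designated in Hundesig. apply lt_test_neq_0 in HFlt.
  destruct (lt_test _ _); [contradiction|]. rewrite Htaut in Hundesig. simpl in Hundesig. lia.
Qed.

Definition value_table (j : nat) (val : nat -> nat) (F : form) : list nat :=
  map (fun G => npair (code_form G) (value (M j) val G)) (subformulas F).

Lemma look_value_table j val F G :
  In G (subformulas F) ->
  look (code_list (value_table j val F)) (code_form G) = value (M j) val G.
Proof.
  intros HG. destruct (look_spec (value_table j val F) (code_form G))
    as [[Hnot _] | [e [He [Hkey ->]]]].
  - exfalso. apply (Hnot (npair (code_form G) (value (M j) val G)));
      [apply in_map_iff; eauto | apply pi1_npair].
  - apply in_map_iff in He as [G' [<- _]]. autorewrite with pairing in *.
    apply code_form_inj in Hkey. subst. reflexivity.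
Qed.

Lemma has_key_value_table j val F G :
  In G (subformulas F) -> has_key (code_list (value_table j val F)) (code_form G) <> 0.
Proof.
  intros HG. apply has_key_spec. exists (npair (code_form G) (value (M j) val G)).
  split; [apply in_map_iff; eauto | apply pi1_npair].
Qed.

Lemma value_table_ok j val F :
  wf ar F -> valuation (M j) val -> table_ok j (value_table j val F).
Proof.
  intros WF Hval e He. apply in_map_iff in He as [G [<- HG]].
  pose proof (wf_subformulas ar F G WF HG) as WG.
  unfold entry_ok. autorewrite with pairing nonzero. rewrite look_value_table by exact HG.
  split; [split; [apply value_lt | reflexivity]; assumption|].
  destruct G as [n | c args]; simpl code_form; autorewrite with pairing; simpl; [lia|].
  apply wf_App in WG as (Hc & Hlen & Wargs). autorewrite with nonzero.
  rewrite lall_spec, lmap_spec, map_map. split.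
  - intros k Hk. apply in_map_iff in Hk as [a [<- Ha]].
    apply has_key_value_table, (subformulas_arg F c args); assumption.
  - rewrite (map_ext_in (fun a => look (code_list (value_table j val F)) (code_form a))
                        (value (M j) val))
      by (intros a Ha; apply look_value_table, (subformulas_arg F c args); assumption).
    rewrite truth_fun_code; [reflexivity | exact Hc | rewrite length_map; exact Hlen|].
    intros v Hv. apply in_map_iff in Hv as [a [<- Ha]]. apply value_lt; auto.
Qed.

Lemma countermodel_check_complete j val F :
  wf ar F -> valuation (M j) val -> ~ satisfies (M j) val F ->
  exists w, countermodel_check w (code_form F) <> 0.
Proof.
  intros WF Hval Hsat. exists (npair j (code_list (value_table j val F))).
  unfold countermodel_check. autorewrite with pairing nonzero.
  rewrite look_value_table by apply subformulas_refl.
  split; [split|].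
  - rewrite lall_spec. apply value_table_ok; assumption.
  - apply has_key_value_table, subformulas_refl.
  - unfold designated, satisfies in *. pose proof (value_lt j val F Hval WF) as Hlt.
    apply lt_test_neq_0 in Hlt. destruct (lt_test _ _); [contradiction|].
    destruct (desig _ _); [contradiction|]. simpl. lia.
Qed.

Lemma countermodel_check_spec F :
  wf ar F ->
  ((exists j, ~ Taut ar (M j) F) <-> exists w, countermodel_check w (code_form F) <> 0).
Proof.
  intros WF. split.
  - intros [j Hj].
    destruct (classic (exists val, valuation (M j) val /\ ~ satisfies (M j) val F))
      as [[val [Hval Hsat]] | Hnone].
    + eapply countermodel_check_complete; eassumption.
    + exfalso. apply Hj. split; [exact WF|].
      intros val Hval. apply NNPP. intros Hsat. apply Hnone. eauto.
  - intros [w Hw]. exists (pi1 w). apply countermodel_check_sound; assumption.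
Qed.

End Countermodels.

Theorem semidecidable_refuted ar M :
  (forall i, is_fvlogic ar (M i)) -> effectively_enumerated ar M ->
  semidecidable ar (fun F => exists j, ~ Taut ar (M j) F).
Proof.
  intros Hfv [pN [pD [pT [HN [HD HT]]]]]. exists (countermodel_check ar M). split.
  - eapply computable2_countermodel_check; eassumption.
  - intros F WF. eapply countermodel_check_spec; eassumption.
Qed.

Theorem corollary3 (ar : language) (C : calculus) :
  wf_calculus ar C ->
  ~ decidable_set ar (Thm ar C) ->
  ~ effectively_approximable ar C.
Proof.
  intros _ Hundec [M [Hfv [Henum [_ [_ Hthm]]]]].
  apply Hundec, decidable_of_semidecidable; [apply semidecidable_Thm|].
  apply (semidecidable_ext ar (fun F => exists j, ~ Taut ar (M j) F)).
  - intros F WF. rewrite (Hthm F WF).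
    split; [intros [j Hj] Hall; apply Hj, Hall | apply not_all_ex_not].
  - apply semidecidable_refuted; assumption.
Qed.
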